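(* Any degree-three IQP circuit $H^{\otimes n}D_{IQP3}H^{\otimes n}$ on $n$ qubits whose diagonal part $D_{IQP3}$ consists of $d$ layers of $Z$, $CZ$ and $CCZ$ gates can be compiled, after appending $O(nd)$ ancilla qubits initialized to $|0\rangle$ (and returned to $|0\rangle$), into an equivalent circuit consisting of Clifford gates and a single layer of gates $T^{\pm1}$.
   Context: A degree-three IQP circuit has the form $H^{\otimes n}D_{IQP3}H^{\otimes n}$ where $D_{IQP3}$ is a product of $Z$, $CZ$ and $CCZ$ gates. $T=\mathrm{diag}(1,e^{i\pi/4})$. A single layer means the $T^{\pm1}$ gates act in parallel on distinct qubits. The Clifford group is generated by $H$, $S=\mathrm{diag}(1,i)$ and CNOT. *)

From mathcomp Require Import all_boot all_order all_algebra all_field.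
Set Implicit Arguments. Unset Strict Implicit. Unset Printing Implicit Defensive.
Import Order.TTheory GRing.Theory Num.Theory.
Local Open Scope ring_scope.

Definition bits (m : nat) := {ffun 'I_m -> bool}.

(* operators on m qubits: A x y = <x| A |y> *)
Definition op (m : nat) := bits m -> bits m -> algC.

Definition opmul m (A B : op m) : op m := fun x y => \sum_(z : bits m) A x z * B z y.
Definition opid m : op m := fun x y => (x == y)%:R.
Definition diagop m (f : bits m -> algC) : op m := fun x y => (x == y)%:R * f x.

Definition omega : algC := (1 + 'i) / sqrtC 2.

Definition Hgate m (q : 'I_m) : op m := fun x y =>
  if [forall j, (j != q) ==> (x j == y j)]
  then (if x q && y q then -1 else 1) / sqrtC 2 else 0.
Definition Sgate m (q : 'I_m) : op m := diagop (fun x => if x q then 'i else 1).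
Definition CNOTgate m (c t : 'I_m) : op m := fun x y =>
  (x == [ffun j => if j == t then y t (+) y c else y j])%:R.

Inductive cgate (m : nat) :=
| CH of 'I_m
| CS of 'I_m
| CCNOT of 'I_m & 'I_m.

Definition cgate_wf m (g : cgate m) : bool :=
  if g is CCNOT c t then c != t else true.

Definition cgate_op m (g : cgate m) : op m :=
  match g with
  | CH q => Hgate q
  | CS q => Sgate q
  | CCNOT c t => CNOTgate c t
  end.

(* circuit [g1; ...; gk], g1 applied first: operator G_k ... G_1 *)
Fixpoint circ m (s : seq (cgate m)) : op m :=
  match s with
  | [::] => @opid m
  | g :: s' => opmul (circ s') (cgate_op g)
  end.

Definition tlayer m (l : {ffun 'I_m -> option bool}) : op m :=
  diagop (fun x => \prod_(q : 'I_m)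
     match l q with
     | None => 1
     | Some true => if x q then omega else 1
     | Some false => if x q then omega^-1 else 1
     end).

(* A Z / CZ / CCZ gate is given by the set of 1, 2 or 3 qubits it acts on;
   a layer is a list of such gates acting on pairwise disjoint qubits. *)
Definition is_layer n (l : seq {set 'I_n}) : bool :=
  all (fun s : {set 'I_n} => (0 < #|s| <= 3)%N) l &&
  pairwise (fun s t : {set 'I_n} => [disjoint s & t]) l.

Definition DIQP3 n (L : seq (seq {set 'I_n})) : op n :=
  diagop (fun x => \prod_(l <- L) \prod_(s <- l)
                     (if [forall i in s, x i] then -1 else 1)).

Definition Hall n : op n := fun x y =>
  \prod_(q : 'I_n) ((if x q && y q then -1 else 1) / sqrtC 2).

Definition iqp3 n (L : seq (seq {set 'I_n})) : op n :=
  opmul (@Hall n) (opmul (DIQP3 L) (@Hall n)).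

(* |x> (x) |u> on n + a qubits: system qubits first, ancillas last *)
Definition join n a (x : bits n) (u : bits a) : bits (n + a) :=
  [ffun i => match split i with inl j => x j | inr k => u k end].

Definition zerob a : bits a := [ffun _ => false].

From mathcomp Require Import all_boot all_algebra all_field ring.
From Stdlib Require Import FunctionalExtensionality.
Set Implicit Arguments. Unset Strict Implicit. Unset Printing Implicit Defensive.
Import GRing.Theory Num.Theory.
Local Open Scope ring_scope.

(* Between the two Hadamard layers, D_IQP3 is the diagonal phase (-1)^f(x),
   f a sum of monomials of degree at most three in the bits of x.  Since
   (-1)^b = omega^(4b) and four times such a monomial is an integer combination
   of parities of its bits, D_IQP3 is a product of phases omega^(+-p(x)), p
   ranging over parities.  CNOTs copy each parity into its own ancilla, a single
   T or T^-1 on each ancilla produces its phase, and the same CNOTs uncompute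
   the ancillas.  A gate needs at most seven parities and a layer has at most n
   gates, whence at most 7nd ancillas. *)

Lemma sum_delta_l (T : finType) (R : pzSemiRingType) (a : T) (F : T -> R) :
  \sum_c (a == c)%:R * F c = F a.
Proof.
rewrite (bigD1 a) //= eqxx mul1r big1 ?addr0 // => c.
by rewrite eq_sym => /negbTE ->; rewrite mul0r.
Qed.

Lemma sum_delta_r (T : finType) (R : pzSemiRingType) (b : T) (F : T -> R) :
  \sum_c F c * (c == b)%:R = F b.
Proof.
rewrite (bigD1 b) //= eqxx mulr1 big1 ?addr0 // => c /negbTE ->.
by rewrite mulr0.
Qed.

Lemma prod_indicator (I : finType) (R : comPzSemiRingType) (P : pred I)
    (b : I -> bool) :
  \prod_(i | P i) (b i)%:R = [forall i, P i ==> b i]%:R :> R.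
Proof.
case: (boolP [forall i, P i ==> b i]) => [/forallP allb | ].
  by rewrite big1 // => i /(implyP (allb i)) ->.
rewrite negb_forall => /existsP [i]; rewrite negb_imply => /andP [Pi /negbTE bi].
by rewrite (bigD1 i) //= bi mul0r.
Qed.

Section Operators.
Variable m : nat.
Implicit Types (A B C : op m) (x y z : bits m).

Lemma op_ext A B : (forall x y, A x y = B x y) -> A = B.
Proof.
move=> eqAB; apply: functional_extensionality => x.
by apply: functional_extensionality => y; exact: eqAB.
Qed.

Lemma prod_eq_bits x y : \prod_j (x j == y j)%:R = (x == y)%:R :> algC.
Proof.
rewrite prod_indicator; congr (nat_of_bool _)%:R.
apply/forallP/eqP => [eq_xy|-> j]; last exact: eqxx.
by apply/ffunP => j; exact/eqP/eq_xy.
Qed.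

Lemma opmulA A B C : opmul A (opmul B C) = opmul (opmul A B) C.
Proof.
apply: op_ext => x y; rewrite /opmul.
under eq_bigr do rewrite big_distrr.
rewrite exchange_big /=; apply: eq_bigr => z _.
by rewrite big_distrl /=; apply: eq_bigr => w _; rewrite mulrA.
Qed.

Lemma opmul1 A : opmul A (@opid m) = A.
Proof. by apply: op_ext => x y; rewrite /opmul /opid sum_delta_r. Qed.

Lemma circ_cat (s1 s2 : seq (cgate m)) :
  circ (s1 ++ s2) = opmul (circ s2) (circ s1).
Proof.
elim: s1 => [|g s1 IH] /=; first by rewrite opmul1.
by rewrite IH opmulA.
Qed.

Definition perm_op (f : bits m -> bits m) : op m := fun x y => (x == f y)%:R.

Definition cnot_map (c t : 'I_m) z : bits m :=
  [ffun j => if j == t then z t (+) z c else z j].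

Lemma CNOTgate_perm c t : CNOTgate c t = perm_op (cnot_map c t).
Proof. by []. Qed.

Lemma opmul_perm f g : opmul (perm_op g) (perm_op f) = perm_op (g \o f).
Proof. by apply: op_ext => x y; rewrite /opmul /perm_op sum_delta_r. Qed.

Lemma opmul_diagl (phi : bits m -> algC) A x y :
  opmul (diagop phi) A x y = phi x * A x y.
Proof.
by rewrite /opmul /diagop; under eq_bigr do rewrite -mulrA; rewrite sum_delta_l.
Qed.

Lemma perm_diag_conj f (phi : bits m -> algC) : involutive f ->
  opmul (perm_op f) (opmul (diagop phi) (perm_op f)) = diagop (phi \o f).
Proof.
move=> fK; apply: op_ext => x y.
have -> : opmul (perm_op f) (opmul (diagop phi) (perm_op f)) x y
        = \sum_z (x == f z)%:R * phi z * (z == f y)%:R.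
  by apply: eq_bigr => z _; rewrite opmul_diagl mulrA.
rewrite sum_delta_r fK /diagop /=.
by case: eqP => [-> //|_]; rewrite !mul0r.
Qed.

Definition tensor_op (g : 'I_m -> bool -> bool -> algC) : op m :=
  fun x y => \prod_j g j (x j) (y j).

Lemma opmul_tensor f g :
  opmul (tensor_op f) (tensor_op g)
  = tensor_op (fun j a b => \sum_c f j a c * g j c b).
Proof.
apply: op_ext => x y; rewrite /opmul /tensor_op.
rewrite (bigA_distr_bigA (fun j c => f j (x j) c * g j c (y j))) /=.
by apply: eq_bigr => z _; rewrite big_split.
Qed.

Lemma opid_tensor : @opid m = tensor_op (fun _ a b => (a == b)%:R).
Proof.
by apply: op_ext => x y; rewrite /opid /tensor_op prod_eq_bits.
Qed.

Definition hadamard_entry (a b : bool) : algC :=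
  (if a && b then -1 else 1) / sqrtC 2.

Lemma Hgate_tensor (q : 'I_m) :
  Hgate q
  = tensor_op (fun j a b => if j == q then hadamard_entry a b else (a == b)%:R).
Proof.
apply: op_ext => x y; rewrite /Hgate /tensor_op (bigD1 q) //= eqxx.
rewrite (eq_bigr (fun j => (x j == y j)%:R)); last by move=> j /negbTE ->.
by rewrite prod_indicator; case: ifP; rewrite ?mulr1 ?mulr0.
Qed.

Lemma circ_Hgates (qs : seq 'I_m) : uniq qs ->
  circ (map (@CH m) qs)
  = tensor_op (fun j a b => if j \in qs then hadamard_entry a b else (a == b)%:R).
Proof.
elim: qs => [|q qs IH] /=; first by rewrite opid_tensor.
case/andP => qNqs uniq_qs; rewrite IH // Hgate_tensor opmul_tensor.
congr tensor_op; do 3![apply: functional_extensionality => ?].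
rewrite in_cons; case: eqVneq => [->|_] /=; last by rewrite sum_delta_r.
by rewrite (negbTE qNqs) sum_delta_l.
Qed.

End Operators.

Section Ancillas.
Variables n a : nat.
Implicit Types (x y v : bits n) (u w : bits a).

Lemma join_lshift x u i : join x u (lshift a i) = x i.
Proof. by rewrite ffunE (unsplitK (inl _ i)). Qed.

Lemma join_rshift x u k : join x u (rshift n k) = u k.
Proof. by rewrite ffunE (unsplitK (inr _ k)). Qed.

Lemma sum_bits_join (F : bits (n + a) -> algC) :
  \sum_z F z = \sum_v \sum_w F (join v w).
Proof.
rewrite pair_big (reindex (fun p : bits n * bits a => join p.1 p.2)) //=.
exists (fun z => ([ffun i => z (lshift a i)], [ffun k => z (rshift n k)])).
  by move=> [v w] _; congr pair; apply/ffunP => i;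
    rewrite ffunE ?join_lshift ?join_rshift.
move=> z _; apply/ffunP => j.
by case: (split_ordP j) => [i|k] ->; rewrite ?join_lshift ?join_rshift ffunE.
Qed.

Definition system_hadamards : seq (cgate (n + a)) :=
  [seq CH (lshift a i) | i <- enum 'I_n].

Lemma system_hadamards_join y u v w :
  circ system_hadamards (join y u) (join v w) = Hall y v * (u == w)%:R.
Proof.
rewrite /system_hadamards (map_comp (@CH _) (lshift a)) circ_Hgates; last first.
  by rewrite map_inj_uniq ?enum_uniq //; exact: lshift_inj.
rewrite /tensor_op big_split_ord /=; congr (_ * _).
  apply: eq_bigr => i _.
  by rewrite !join_lshift (map_f (lshift a)) ?mem_enum.
rewrite -prod_eq_bits; apply: eq_bigr => k _; rewrite !join_rshift.
by case: mapP => // [[i _ /eqP]]; rewrite eq_rlshift.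
Qed.

Definition cnots (s : seq ('I_n * 'I_a)) : seq (cgate (n + a)) :=
  [seq CCNOT (lshift a p.1) (rshift n p.2) | p <- s].

Definition cnots_action (s : seq ('I_n * 'I_a)) (z : bits (n + a)) :
    bits (n + a) :=
  [ffun j => if split j is inr k
             then z j (+) \big[addb/false]_(p <- s | p.2 == k) z (lshift a p.1)
             else z j].

Lemma cnots_action_lshift s z i : cnots_action s z (lshift a i) = z (lshift a i).
Proof. by rewrite ffunE (unsplitK (inl _ i)). Qed.

Lemma cnots_action_rshift s z k :
  cnots_action s z (rshift n k)
  = z (rshift n k) (+) \big[addb/false]_(p <- s | p.2 == k) z (lshift a p.1).
Proof. by rewrite ffunE (unsplitK (inr _ k)). Qed.

Lemma cnots_action_cons p s z :
  cnots_action s (cnot_map (lshift a p.1) (rshift n p.2) z)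
  = cnots_action (p :: s) z.
Proof.
apply/ffunP => j; case: (split_ordP j) => [i|k] ->.
  by rewrite !cnots_action_lshift ffunE eq_lrshift.
rewrite !cnots_action_rshift big_cons ffunE eq_rshift.
under eq_bigr do rewrite ffunE eq_lrshift.
by rewrite [k == _]eq_sym; case: eqP => [->|_]; rewrite ?addbA.
Qed.

Lemma circ_cnots s : circ (cnots s) = perm_op (cnots_action s).
Proof.
elim: s => [|p s IH] /=.
  apply: op_ext => x y; rewrite /opid /perm_op; congr (_ == _)%:R.
  apply/ffunP => j; case: (split_ordP j) => [i|k] ->.
    by rewrite cnots_action_lshift.
  by rewrite cnots_action_rshift big_nil addbF.
rewrite IH /= CNOTgate_perm opmul_perm; congr perm_op.
by apply: functional_extensionality => z; exact: cnots_action_cons.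
Qed.

Lemma cnots_action_involutive s : involutive (cnots_action s).
Proof.
move=> z; apply/ffunP => j; case: (split_ordP j) => [i|k] ->.
  by rewrite !cnots_action_lshift.
rewrite cnots_action_rshift; under eq_bigr do rewrite cnots_action_lshift.
by rewrite cnots_action_rshift -addbA addbb addbF.
Qed.

End Ancillas.

Definition parity n (l : seq 'I_n) (v : bits n) : bool :=
  \big[addb/false]_(i <- l) v i.

Definition tphase (b c : bool) : algC :=
  if c then (if b then omega else omega^-1) else 1.

Definition phase_poly n (sp : seq (seq 'I_n * bool)) (v : bits n) : algC :=
  \prod_(t <- sp) tphase t.2 (parity t.1 v).

Definition tlayer_phase m (tl : {ffun 'I_m -> option bool}) (z : bits m) :=
  \prod_q (if tl q is Some b then tphase b (z q) else 1).

Lemma tlayerE m (tl : {ffun 'I_m -> option bool}) :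
  tlayer tl = diagop (tlayer_phase tl).
Proof.
apply: op_ext => x y; congr (_ * _); apply: eq_bigr => q _.
by case: (tl q) => [[]|].
Qed.

Section PhasePolynomialCircuit.
Variables (n : nat) (sp : seq (seq 'I_n * bool)).
Local Notation A := (size sp).
Local Notation term k := (tnth (in_tuple sp) k).

Definition parity_copies : seq ('I_n * 'I_A) :=
  [seq (i, k) | k <- enum 'I_A, i <- (term k).1].

Definition phase_tlayer : {ffun 'I_(n + A) -> option bool} :=
  [ffun j => if split j is inr k then Some (term k).2 else None].

Lemma parity_copies_rshift v k :
  cnots_action parity_copies (join v (zerob A)) (rshift n k) = parity (term k).1 v.
Proof.
rewrite cnots_action_rshift join_rshift ffunE big_mkcond big_allpairs_dep /=.
rewrite (bigD1_seq k) ?mem_enum ?enum_uniq //= eqxx [X in _ (+) X]big1_seq ?addbF.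
  by apply: eq_bigr => i _; rewrite join_lshift.
by move=> k' /andP [/negbTE k'k _]; rewrite big1 // => i _; rewrite k'k.
Qed.

Lemma tlayer_phase_parity_copies v :
  tlayer_phase phase_tlayer (cnots_action parity_copies (join v (zerob A)))
  = phase_poly sp v.
Proof.
rewrite /tlayer_phase big_split_ord /= big1 ?mul1r; last first.
  by move=> i _; rewrite ffunE (unsplitK (inl _ i)).
rewrite /phase_poly [RHS]big_tnth; apply: eq_bigr => k _.
by rewrite parity_copies_rshift ffunE (unsplitK (inr _ k)).
Qed.

Definition compute_parities := system_hadamards n A ++ cnots parity_copies.
Definition uncompute_parities := cnots parity_copies ++ system_hadamards n A.

Lemma phase_poly_circuitE x y u :
  opmul (circ uncompute_parities)
    (opmul (tlayer phase_tlayer) (circ compute_parities))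
    (join y u) (join x (zerob A))
  = if u == zerob A
    then opmul (@Hall n) (opmul (diagop (phase_poly sp)) (@Hall n)) y x else 0.
Proof.
rewrite !circ_cat circ_cnots tlayerE.
set H := circ _; set P := perm_op _; set T := diagop _.
have -> : opmul (opmul H P) (opmul T (opmul P H))
          = opmul H (opmul (opmul P (opmul T P)) H) by rewrite !opmulA.
rewrite perm_diag_conj; last exact: cnots_action_involutive.
rewrite {1}/opmul sum_bits_join.
under eq_bigr do under eq_bigr do
  rewrite opmul_diagl /H !system_hadamards_join /= !mulrA.
under eq_bigr do rewrite sum_delta_r tlayer_phase_parity_copies.
case: eqP => _; last by rewrite big1 // => v _; rewrite mulr0 !mul0r.
by apply: eq_bigr => v _; rewrite opmul_diagl mulr1 mulrA.
Qed.

End PhasePolynomialCircuit.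

Lemma omega_sqr : omega ^+ 2 = 'i.
Proof.
rewrite /omega expr_div_n sqrtCK.
have -> : (1 + 'i) ^+ 2 = 2 * 'i :> algC by rewrite sqrrD sqrCi expr1n mul1r; ring.
by rewrite mulrAC divff ?mul1r // pnatr_eq0.
Qed.

Lemma omega4 : omega ^+ 4 = -1.
Proof. by rewrite (exprM omega 2 2) omega_sqr sqrCi. Qed.

Lemma omega8 : omega ^+ 8 = 1.
Proof. by rewrite (exprM omega 4 2) omega4 sqrrN expr1n. Qed.

Lemma omega_neq0 : omega != 0.
Proof. by apply: contra_eq_neq omega8 => ->; rewrite expr0n eq_sym oner_eq0. Qed.

Lemma omegaV : omega^-1 = omega ^+ 7.
Proof. by apply: (mulfI omega_neq0); rewrite -exprS omega8 divff // omega_neq0. Qed.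

Lemma omega_exp_mod (M N : nat) : M = N %[mod 8] -> omega ^+ M = omega ^+ N.
Proof.
have expr_mod8 K : omega ^+ K = omega ^+ (K %% 8).
  by rewrite {1}(divn_eq K 8) exprD mulnC exprM omega8 expr1n mul1r.
by move=> eqMN; rewrite expr_mod8 eqMN -expr_mod8.
Qed.

Lemma phase_poly_omega n (sp : seq (seq 'I_n * bool)) v :
  phase_poly sp v = omega ^+ (\sum_(t <- sp) parity t.1 v * (if t.2 then 1 else 7)).
Proof.
rewrite -prodrXr; apply: eq_bigr => [[l b]] _ /=.
by rewrite /tphase; case: (parity l v); case: b; rewrite ?omegaV.
Qed.

(* For bits x, y, z: 4xy = 2x + 2y - 2(x (+) y) and
   4xyz = x + y + z - (x (+) y) - (x (+) z) - (y (+) z) + (x (+) y (+) z). *)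
Definition gate_terms n (s : {set 'I_n}) : seq (seq 'I_n * bool) :=
  match enum s with
  | [:: i] => nseq 4 ([:: i], true)
  | [:: i; j] => [:: ([:: i], true); ([:: i], true); ([:: j], true); ([:: j], true);
                    ([:: i; j], false); ([:: i; j], false)]
  | [:: i; j; k] => [:: ([:: i], true); ([:: j], true); ([:: k], true);
                       ([:: i; j], false); ([:: i; k], false); ([:: j; k], false);
                       ([:: i; j; k], true)]
  | _ => [::]
  end.

Lemma size_gate_terms n (s : {set 'I_n}) : (size (gate_terms s) <= 7)%N.
Proof. by rewrite /gate_terms; case: (enum s) => [|i [|j [|k []]]]. Qed.

Lemma phase_poly_gate_terms n (s : {set 'I_n}) v : (0 < #|s| <= 3)%N ->
  phase_poly (gate_terms s) v = if [forall i in s, v i] then -1 else 1.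
Proof.
move=> size_s; have -> : [forall i in s, v i] = all v (enum s).
  by apply/forall_inP/allP => vs i; [rewrite mem_enum | rewrite -mem_enum]; exact: vs.
have -> b : (if b then -1 else 1) = omega ^+ (4 * b).
  by case: b; [exact: esym omega4 | exact: esym (expr0 omega)].
rewrite phase_poly_omega; apply: omega_exp_mod.
move: size_s; rewrite /gate_terms cardE.
case: (enum s) => [|i [|j [|k [|l r]]]] //= _;
  rewrite /parity !big_cons !big_nil /=.
- by case: (v i).
- by case: (v i); case: (v j).
- by case: (v i); case: (v j); case: (v k).
Qed.

Lemma size_flatten_gate_terms n (G : seq {set 'I_n}) :
  (size (flatten [seq gate_terms s | s <- G]) <= 7 * size G)%N.
Proof.
elim: G => [|s G IH] //=.
by rewrite size_cat mulnS leq_add ?size_gate_terms.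
Qed.

Lemma size_pairwise_disjoint (T : finType) (l : seq {set T}) (U : {set T}) :
  all (fun s : {set T} => (0 < #|s|)%N) l ->
  pairwise (fun s t : {set T} => [disjoint s & t]) l ->
  all (fun s : {set T} => s \subset U) l -> (size l <= #|U|)%N.
Proof.
elim: l U => [|s l IH] U //= /andP [s_gt0 l_gt0] /andP [s_disj l_disj].
case/andP => sU lU.
have : (size l <= #|U :\: s|)%N.
  apply: IH => //; apply/allP => t tl; rewrite subsetD (allP lU) //= disjoint_sym.
  exact: (allP s_disj).
rewrite cardsD (setIidPr sU) => le_l; apply: leq_ltn_trans le_l _.
by rewrite ltn_subrL s_gt0 (leq_trans s_gt0) ?subset_leq_card.
Qed.

Lemma size_layer n (l : seq {set 'I_n}) : is_layer l -> (size l <= n)%N.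
Proof.
case/andP => sizes disj.
have := @size_pairwise_disjoint _ l [set: 'I_n]; rewrite cardsT card_ord; apply=> //.
  by apply/allP => s /(allP sizes) /andP [].
by apply/allP => s _; exact: subsetT.
Qed.

Lemma size_flatten_layers n (L : seq (seq {set 'I_n})) :
  all (@is_layer n) L -> (size (flatten L) <= n * size L)%N.
Proof.
elim: L => [|l L IH] //= /andP [layer_l layers_L].
by rewrite size_cat mulnS leq_add ?size_layer ?IH.
Qed.

Lemma DIQP3_phase_poly n (L : seq (seq {set 'I_n})) : all (@is_layer n) L ->
  DIQP3 L = diagop (phase_poly (flatten [seq gate_terms s | s <- flatten L])).
Proof.
move=> layersL; congr diagop; apply: functional_extensionality => v.
rewrite -big_flatten /phase_poly [RHS]big_flatten big_map.
apply: eq_big_seq => s /flattenP [l lL sl]; apply/esym/phase_poly_gate_terms.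
by have /andP [/allP sizes _] := allP layersL l lL; exact: sizes.
Qed.

Lemma phase_poly_circuit_wf n (sp : seq (seq 'I_n * bool)) :
  all (@cgate_wf _) (compute_parities sp)
  && all (@cgate_wf _) (uncompute_parities sp).
Proof.
have wf_H : all (@cgate_wf _) (system_hadamards n (size sp)).
  by rewrite all_map; apply/allP.
have wf_P : all (@cgate_wf _) (cnots (parity_copies sp)).
  by rewrite all_map; apply/allP => p _ /=; rewrite eq_lrshift.
by rewrite !all_cat wf_H wf_P.
Qed.

Theorem lemma3 :
  exists K : nat,
  forall (n d : nat) (L : seq (seq {set 'I_n})),
    size L = d -> all (@is_layer n) L ->
    exists a : nat, (a <= K * (n * d))%N /\
    exists (C1 C2 : seq (cgate (n + a))) (tl : {ffun 'I_(n + a) -> option bool}),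
      all (@cgate_wf _) C1 /\ all (@cgate_wf _) C2 /\
      forall (x y : bits n) (u : bits a),
        opmul (circ C2) (opmul (tlayer tl) (circ C1)) (join y u) (join x (zerob a))
        = if u == zerob a then iqp3 L y x else 0.
Proof.
exists 7 => n d L <- layersL.
set sp := flatten [seq gate_terms s | s <- flatten L].
exists (size sp); split.
  exact: leq_trans (size_flatten_gate_terms _) (leq_mul (leqnn 7) (size_flatten_layers layersL)).
exists (compute_parities sp), (uncompute_parities sp), (phase_tlayer sp).
have /andP [wf_in wf_out] := phase_poly_circuit_wf sp.
do 2!split=> //; move=> x y u.
by rewrite phase_poly_circuitE /iqp3 (DIQP3_phase_poly layersL).
Qed.
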